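(* Let $f:[0,1]\to\mathbb{R}$ be a continuous function such that $f(0)=0$ and $f(1)=1$, and let $\gamma(t)=(t,f(t))$, $t\in[0,1]$. Then for each $n\in\mathbb{N}$ there exist points $A_0,A_1,\ldots,A_{n+1}$ on $\gamma$ such that $A_0=(0,0)$, $A_{n+1}=(1,1)$, all the numbers $\pi_1(\overrightarrow{A_iA_{i+1}})$ and $\pi_2(\overrightarrow{A_iA_{i+1}})$, $i=0,\ldots,n$, are strictly positive, and the two sequences $\big(\pi_1(\overrightarrow{A_iA_{i+1}})\big)_{i=0}^{n}$ and $\big(\pi_2(\overrightarrow{A_iA_{i+1}})\big)_{i=0}^{n}$ are the same after a rearrangement.
   Context: $\pi_1,\pi_2:\mathbb{R}^2\to\mathbb{R}$ denote the projections onto the $x$-axis and the $y$-axis, $\pi_1(a,b)=a$, $\pi_2(a,b)=b$. For points $A,B\in\mathbb{R}^2$, $\overrightarrow{AB}=B-A$. *)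

From Stdlib Require Import Reals List Permutation.
Open Scope R_scope.

Definition continuous_on_01 (f : R -> R) : Prop :=
  forall x, 0 <= x <= 1 ->
    forall eps, 0 < eps -> exists delta, 0 < delta /\
      forall y, 0 <= y <= 1 -> Rabs (y - x) < delta -> Rabs (f y - f x) < eps.

Definition gamma (f : R -> R) (t : R) : R * R := (t, f t).

Definition pi1 (P : R * R) : R := fst P.
Definition pi2 (P : R * R) : R := snd P.

Definition vec (A B : R * R) : R * R := (fst B - fst A, snd B - snd A).

(* If [f] has a fixed point [p] strictly between [a] and [b], the step from
   [(a, a)] to [(p, p)] is balanced by itself and induction handles [[p, b]].
   Otherwise the graph lies on one side of the diagonal, say above it (the other
   case follows by the point reflection through the centre of the square).  Then
   choose the shift [c > 0] for which the orbit [x_0 = a], [x_(k+1) = c + f x_k]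
   reaches [b] exactly at step [n + 1]: each vertical increment
   [f x_(k+1) - f x_k] is the next horizontal one [x_(k+2) - x_(k+1)], and the
   last one, [b - f x_n], is [c = x_1 - x_0], so the vertical increments are a
   cyclic shift of the horizontal ones. *)

From Stdlib Require Import Reals List Permutation Lia Lra Classical.
Import ListNotations.
Open Scope R_scope.

Lemma continuity_identity : continuity (fun x => x).
Proof. exact (derivable_continuous id derivable_id). Qed.

Lemma continuity_contraction (g : R -> R) :
  (forall x y, Rabs (g y - g x) <= Rabs (y - x)) -> continuity g.
Proof.
  intros Hg x eps Heps; exists eps; split; [exact Heps|].
  intros y [_ Hy]; exact (Rle_lt_trans _ _ _ (Hg x y) Hy).
Qed.

Lemma Rmin_contraction b x y : Rabs (Rmin b y - Rmin b x) <= Rabs (y - x).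
Proof. unfold Rmin; repeat destruct Rle_dec; unfold Rabs; repeat destruct Rcase_abs; lra. Qed.

Lemma Rmax_contraction a x y : Rabs (Rmax a y - Rmax a x) <= Rabs (y - x).
Proof. unfold Rmax; repeat destruct Rle_dec; unfold Rabs; repeat destruct Rcase_abs; lra. Qed.

Definition clamp (a b x : R) : R := Rmax a (Rmin b x).

Lemma clamp_contraction a b x y : Rabs (clamp a b y - clamp a b x) <= Rabs (y - x).
Proof. eapply Rle_trans; [apply Rmax_contraction | apply Rmin_contraction]. Qed.

Lemma clamp_in a b x : a <= b -> a <= clamp a b x <= b.
Proof. unfold clamp, Rmax, Rmin; repeat destruct Rle_dec; lra. Qed.

Lemma clamp_id a b x : a <= x <= b -> clamp a b x = x.
Proof. unfold clamp, Rmax, Rmin; repeat destruct Rle_dec; lra. Qed.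

Lemma continuous_on_01_clamp f :
  continuous_on_01 f -> continuity (fun x => f (clamp 0 1 x)).
Proof.
  intros Hf x eps Heps.
  destruct (Hf (clamp 0 1 x) (clamp_in 0 1 x Rle_0_1) eps Heps) as [d [Hd Hfd]].
  exists d; split; [exact Hd|]; intros y [_ Hy].
  apply Hfd; [apply clamp_in, Rle_0_1|].
  exact (Rle_lt_trans _ _ _ (clamp_contraction 0 1 x y) Hy).
Qed.

(* The point reflection [(x, y) |-> (a + b - x, a + b - y)] maps the graph of
   [f] onto that of [reflect a b f] and traverses a chain backwards. *)
Definition reflect (a b : R) (f : R -> R) (x : R) : R := a + b - f (a + b - x).

Lemma continuity_reflect f a b : continuity f -> continuity (reflect a b f).
Proof.
  intros Hf; unfold reflect.
  apply (continuity_minus (fun _ => a + b) (fun x => f (a + b - x))).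
  - apply continuity_const; intros ? ?; reflexivity.
  - apply (continuity_comp (fun x => a + b - x) f); [|exact Hf].
    apply (continuity_minus (fun _ => a + b) (fun x => x)).
    + apply continuity_const; intros ? ?; reflexivity.
    + exact continuity_identity.
Qed.

Definition balanced_chain (f : R -> R) (a b : R) (n : nat) (T : nat -> R) : Prop :=
  T 0%nat = a /\ T (S n) = b /\
  (forall i, (i <= S n)%nat -> a <= T i <= b) /\
  (forall i, (i <= n)%nat -> T i < T (S i) /\ f (T i) < f (T (S i))) /\
  Permutation (map (fun i => T (S i) - T i) (seq 0 (S n)))
              (map (fun i => f (T (S i)) - f (T i)) (seq 0 (S n))).

Lemma balanced_chain_ext f g a b n T :
  (forall t, a <= t <= b -> f t = g t) ->
  balanced_chain f a b n T -> balanced_chain g a b n T.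
Proof.
  intros Hfg [H0 [HSn [Hrange [Hinc Hperm]]]].
  assert (HT : forall i, (i <= S n)%nat -> f (T i) = g (T i))
    by (intros i Hi; apply Hfg, Hrange, Hi).
  split; [exact H0|]; split; [exact HSn|]; split; [exact Hrange|]; split.
  - intros i Hi; rewrite <- !HT by lia; exact (Hinc i Hi).
  - rewrite (map_ext_in (fun i => g (T (S i)) - g (T i)) (fun i => f (T (S i)) - f (T i)));
      [exact Hperm|].
    intros i Hi%in_seq; rewrite !HT by lia; reflexivity.
Qed.

Lemma balanced_chain_single f a b :
  a < b -> f a = a -> f b = b ->
  balanced_chain f a b 0 (fun i => match i with O => a | _ => b end).
Proof.
  intros Hab Ha Hb.
  split; [reflexivity|]; split; [reflexivity|]; split; [intros [|i] _; lra|]; split.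
  - intros i Hi; replace i with 0%nat by lia; rewrite Ha, Hb; lra.
  - simpl; rewrite Ha, Hb; apply Permutation_refl.
Qed.

Lemma balanced_chain_cons f a p b n T :
  a < p -> f a = a -> f p = p -> balanced_chain f p b n T ->
  balanced_chain f a b (S n) (fun i => match i with O => a | S j => T j end).
Proof.
  intros Hap Ha Hp [H0 [HSn [Hrange [Hinc Hperm]]]].
  split; [reflexivity|]; split; [exact HSn|]; split.
  { pose proof (Hrange 0%nat ltac:(lia)).
    intros [|i] Hi; [|specialize (Hrange i ltac:(lia))]; lra. }
  split.
  { intros [|i] Hi; [rewrite H0, Ha, Hp; lra | apply Hinc; lia]. }
  change (seq 0 (S (S n))) with (0%nat :: seq 1 (S n)).
  rewrite <- seq_shift; cbn [map]; rewrite !map_map, H0, Ha, Hp.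
  exact (perm_skip _ Hperm).
Qed.

Lemma translation_orbit_balanced f a b n c T :
  0 < c -> f a = a -> f b = b -> (forall t, a <= t <= b -> t <= f t) ->
  T 0%nat = a -> T (S n) = b -> (forall i, (i <= S n)%nat -> a <= T i <= b) ->
  (forall i, (i <= n)%nat -> T (S i) = c + f (T i)) ->
  balanced_chain f a b n T.
Proof.
  intros Hc Ha Hb Habove H0 HSn Hrange Hstep.
  set (dx := fun i => T (S i) - T i).
  assert (Hdx : forall i, (i <= n)%nat -> 0 < dx i).
  { intros i Hi; unfold dx; rewrite Hstep by exact Hi.
    pose proof (Habove _ (Hrange i ltac:(lia))); lra. }
  assert (Hdy : forall i, (i <= n)%nat ->
            f (T (S i)) - f (T i) = if Nat.eq_dec i n then dx 0%nat else dx (S i)).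
  { intros i Hi; unfold dx; destruct Nat.eq_dec as [->|Hne].
    - pose proof (Hstep n (le_n n)) as Hlast; rewrite HSn in Hlast.
      rewrite HSn, Hb, (Hstep 0%nat), H0, Ha by lia; lra.
    - rewrite (Hstep (S i)), (Hstep i) by lia; ring. }
  split; [exact H0|]; split; [exact HSn|]; split; [exact Hrange|]; split.
  - intros i Hi; pose proof (Hdy i Hi) as Hy; pose proof (Hdx i Hi).
    destruct (Nat.eq_dec i n);
      [pose proof (Hdx 0%nat ltac:(lia)) | pose proof (Hdx (S i) ltac:(lia))];
      unfold dx in *; split; lra.
  - assert (Hrot : map (fun i => f (T (S i)) - f (T i)) (seq 0 (S n))
                   = map dx (seq 1 n) ++ [dx 0%nat]).
    { rewrite seq_S, map_app, <- seq_shift, map_map; cbn [map]; f_equal.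
      - apply map_ext_in; intros i Hi%in_seq.
        rewrite Hdy by lia; destruct Nat.eq_dec; [lia | reflexivity].
      - rewrite Hdy by lia; destruct Nat.eq_dec; [reflexivity | lia]. }
    rewrite Hrot; apply Permutation_cons_append.
Qed.

Section AboveDiagonal.

Variables (f : R -> R) (a b : R).
Hypotheses (Hf : continuity f) (Hab : a < b) (Ha : f a = a) (Hb : f b = b)
  (Habove : forall t, a <= t <= b -> t <= f t).

(* Capping at [b] keeps the orbit inside [[a, b]], where [f] lies above the
   diagonal, for every shift [c >= 0]. *)
Definition capped_orbit (c : R) (k : nat) : R :=
  Nat.iter k (fun x => Rmin b (c + f x)) a.

Lemma continuity_capped_orbit k : continuity (fun c => capped_orbit c k).
Proof.
  induction k as [|k IHk]; [apply continuity_const; intros ? ?; reflexivity|].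
  apply (continuity_comp (fun c => c + f (capped_orbit c k)) (Rmin b)).
  - apply (continuity_plus (fun c => c) (fun c => f (capped_orbit c k)));
      [exact continuity_identity | exact (continuity_comp _ f IHk Hf)].
  - apply continuity_contraction, Rmin_contraction.
Qed.

Lemma capped_orbit_0 k : capped_orbit 0 k = a.
Proof.
  induction k as [|k IHk]; [reflexivity|].
  simpl; fold (capped_orbit 0 k); rewrite IHk, Ha, Rplus_0_l.
  apply Rmin_right; lra.
Qed.

Lemma capped_orbit_range c k : 0 <= c -> a <= capped_orbit c k <= b.
Proof.
  intros Hc; induction k as [|k IHk]; [simpl; lra|].
  simpl; fold (capped_orbit c k); pose proof (Habove _ IHk).
  unfold Rmin; destruct Rle_dec; lra.
Qed.

Lemma capped_orbit_nondecreasing c k :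
  0 <= c -> capped_orbit c k <= capped_orbit c (S k).
Proof.
  intros Hc; simpl; fold (capped_orbit c k).
  pose proof (capped_orbit_range c k Hc); pose proof (Habove _ (capped_orbit_range c k Hc)).
  unfold Rmin; destruct Rle_dec; lra.
Qed.

Lemma capped_orbit_le c k m :
  0 <= c -> (k <= m)%nat -> capped_orbit c k <= capped_orbit c m.
Proof.
  intros Hc Hkm; induction Hkm as [|m _ IH]; [lra|].
  pose proof (capped_orbit_nondecreasing c m Hc); lra.
Qed.

Lemma exists_landing_shift n :
  exists c, 0 < c /\ c + f (capped_orbit c n) = b /\ capped_orbit c n < b.
Proof.
  set (h := fun c => c + f (capped_orbit c n) - b).
  assert (Hh : continuity h).
  { apply (continuity_minus (fun c => c + f (capped_orbit c n)) (fun _ => b)).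
    - apply (continuity_plus (fun c => c) (fun c => f (capped_orbit c n)));
        [exact continuity_identity|].
      exact (continuity_comp _ f (continuity_capped_orbit n) Hf).
    - apply continuity_const; intros ? ?; reflexivity. }
  assert (Hh0 : h 0 < 0) by (unfold h; rewrite capped_orbit_0, Ha; lra).
  assert (Hh1 : 0 <= h (b - a)).
  { unfold h; pose proof (capped_orbit_range (b - a) n ltac:(lra)) as Hr.
    pose proof (Habove _ Hr); lra. }
  destruct (IVT_cor h 0 (b - a) Hh ltac:(lra) ltac:(nra)) as [c [Hc Hhc]].
  assert (Hc0 : c <> 0) by (intros ->; lra).
  unfold h in Hhc; exists c; split; [lra|]; split; [lra|].
  destruct (capped_orbit_range c n ltac:(lra)) as [_ [Hlt|Heq]]; [exact Hlt|].
  rewrite Heq, Hb in Hhc; lra.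
Qed.

Lemma capped_orbit_uncapped c n :
  0 <= c -> c + f (capped_orbit c n) = b -> capped_orbit c n < b ->
  forall k, (k <= n)%nat -> capped_orbit c (S k) = c + f (capped_orbit c k).
Proof.
  intros Hc Hland Hn k Hk; simpl; fold (capped_orbit c k).
  apply Rmin_right.
  destruct (Nat.eq_dec k n) as [->|Hne]; [lra|].
  destruct (Rle_dec (c + f (capped_orbit c k)) b) as [Hle|Hgt]; [exact Hle|].
  exfalso.
  assert (Hcap : capped_orbit c (S k) = b)
    by (simpl; fold (capped_orbit c k); apply Rmin_left; lra).
  pose proof (capped_orbit_le c (S k) n Hc ltac:(lia)); lra.
Qed.

Lemma balanced_chain_above_diagonal n : exists T, balanced_chain f a b n T.
Proof.
  destruct (exists_landing_shift n) as [c [Hc [Hland Hn]]].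
  pose proof (capped_orbit_uncapped c n ltac:(lra) Hland Hn) as Hstep.
  exists (capped_orbit c).
  apply (translation_orbit_balanced f a b n c); auto.
  - rewrite Hstep, Hland by lia; reflexivity.
  - intros i _; apply capped_orbit_range; lra.
Qed.

End AboveDiagonal.

Lemma map_seq_reverse {A} (h : nat -> A) n :
  map (fun i => h (n - i)%nat) (seq 0 (S n)) = rev (map h (seq 0 (S n))).
Proof.
  revert h; induction n as [|n IHn]; intros h; [reflexivity|].
  transitivity (h (S n) :: map (fun i => h (n - i)%nat) (seq 0 (S n))).
  - change (seq 0 (S (S n))) with (0%nat :: seq 1 (S n)).
    rewrite <- seq_shift; cbn [map]; rewrite map_map; reflexivity.
  - rewrite IHn, (seq_S (S n) 0), map_app, rev_app_distr; reflexivity.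
Qed.

Lemma balanced_chain_reflect f a b n U :
  balanced_chain (reflect a b f) a b n U ->
  balanced_chain f a b n (fun i => a + b - U (S n - i)%nat).
Proof.
  assert (Hf : forall x, f (a + b - x) = a + b - reflect a b f x)
    by (intros; unfold reflect; ring).
  intros [H0 [HSn [Hrange [Hinc Hperm]]]].
  assert (Hidx : forall i, (i <= n)%nat -> (S n - i = S (n - i))%nat /\ (S n - S i = n - i)%nat)
    by (intros; lia).
  split; [rewrite Nat.sub_0_r, HSn; ring|].
  split; [rewrite Nat.sub_diag, H0; ring|].
  split; [intros i Hi; specialize (Hrange (S n - i)%nat ltac:(lia)); lra|].
  split.
  - intros i Hi; destruct (Hidx i Hi) as [-> ->]; rewrite !Hf.
    destruct (Hinc (n - i)%nat ltac:(lia)); split; lra.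
  - assert (Hx : map (fun i => a + b - U (S n - S i)%nat - (a + b - U (S n - i)%nat)) (seq 0 (S n))
                 = rev (map (fun j => U (S j) - U j) (seq 0 (S n)))).
    { rewrite <- map_seq_reverse; apply map_ext_in; intros i Hi%in_seq.
      destruct (Hidx i ltac:(lia)) as [-> ->]; ring. }
    assert (Hy : map (fun i => f (a + b - U (S n - S i)%nat) - f (a + b - U (S n - i)%nat))
                   (seq 0 (S n))
                 = rev (map (fun j => reflect a b f (U (S j)) - reflect a b f (U j)) (seq 0 (S n)))).
    { rewrite <- map_seq_reverse; apply map_ext_in; intros i Hi%in_seq.
      destruct (Hidx i ltac:(lia)) as [-> ->]; rewrite !Hf; ring. }
    rewrite Hx, Hy; apply Permutation_rev', Hperm.
Qed.

Lemma balanced_chain_below_diagonal f a b n :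
  continuity f -> a < b -> f a = a -> f b = b ->
  (forall t, a <= t <= b -> f t <= t) -> exists T, balanced_chain f a b n T.
Proof.
  intros Hf Hab Ha Hb Hbelow.
  destruct (balanced_chain_above_diagonal (reflect a b f) a b
              (continuity_reflect f a b Hf) Hab) with (n := n) as [U HU].
  - unfold reflect; replace (a + b - a) with b by ring; rewrite Hb; ring.
  - unfold reflect; replace (a + b - b) with a by ring; rewrite Ha; ring.
  - intros t Ht; unfold reflect; pose proof (Hbelow (a + b - t) ltac:(lra)); lra.
  - exists (fun i => a + b - U (S n - i)%nat); exact (balanced_chain_reflect f a b n U HU).
Qed.

Lemma exists_fixed_point_between f s t :
  continuity f -> s <= t -> (f s - s) * (f t - t) <= 0 -> exists z, s <= z <= t /\ f z = z.
Proof.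
  intros Hf Hst Hsign.
  assert (Hg : continuity (fun x => f x - x))
    by exact (continuity_minus f (fun x => x) Hf continuity_identity).
  destruct (IVT_cor (fun x => f x - x) s t Hg Hst Hsign) as [z [Hz Hgz]].
  exists z; split; [exact Hz | lra].
Qed.

Lemma fixed_point_free_one_side f a b :
  continuity f -> f a = a -> f b = b -> ~ (exists p, a < p < b /\ f p = p) ->
  (forall t, a <= t <= b -> t <= f t) \/ (forall t, a <= t <= b -> f t <= t).
Proof.
  intros Hf Ha Hb Hnofix.
  destruct (classic (forall t, a <= t <= b -> t <= f t)) as [Habove|Hnot]; [now left|right].
  apply not_all_ex_not in Hnot; destruct Hnot as [s Hs].
  apply imply_to_and in Hs; destruct Hs as [Hs Hfs].
  intros t Ht; apply Rnot_lt_le; intros Hft.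
  assert (Hs' : a < s < b)
    by (split; apply Rnot_le_lt; intros Hle;
        [replace s with a in Hfs by lra | replace s with b in Hfs by lra]; lra).
  assert (Ht' : a < t < b)
    by (split; apply Rnot_le_lt; intros Hle;
        [replace t with a in Hft by lra | replace t with b in Hft by lra]; lra).
  apply Hnofix.
  destruct (Rle_dec s t) as [Hst|Hts].
  - destruct (exists_fixed_point_between f s t Hf Hst ltac:(nra)) as [z [Hz Hfz]].
    exists z; split; [lra | exact Hfz].
  - destruct (exists_fixed_point_between f t s Hf ltac:(lra) ltac:(nra)) as [z [Hz Hfz]].
    exists z; split; [lra | exact Hfz].
Qed.

Theorem balanced_chain_exists n : forall f a b,
  continuity f -> a < b -> f a = a -> f b = b -> exists T, balanced_chain f a b n T.
Proof.
  induction n as [|n IHn]; intros f a b Hf Hab Ha Hb.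
  - eexists; exact (balanced_chain_single f a b Hab Ha Hb).
  - destruct (classic (exists p, a < p < b /\ f p = p)) as [[p [Hp Hfp]]|Hnofix].
    + destruct (IHn f p b Hf ltac:(lra) Hfp Hb) as [T HT].
      eexists; exact (balanced_chain_cons f a p b n T ltac:(lra) Ha Hfp HT).
    + destruct (fixed_point_free_one_side f a b Hf Ha Hb Hnofix) as [Habove|Hbelow].
      * exact (balanced_chain_above_diagonal f a b Hf Hab Ha Hb Habove (S n)).
      * exact (balanced_chain_below_diagonal f a b (S n) Hf Hab Ha Hb Hbelow).
Qed.

Theorem corollary1 (f : R -> R) (hf : continuous_on_01 f)
  (hf0 : f 0 = 0) (hf1 : f 1 = 1) (n : nat) :
  exists A : nat -> R * R,
    (forall i, (i <= S n)%nat -> exists t, 0 <= t <= 1 /\ A i = gamma f t) /\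
    A 0%nat = (0, 0) /\ A (S n) = (1, 1) /\
    (forall i, (i <= n)%nat ->
       0 < pi1 (vec (A i) (A (S i))) /\ 0 < pi2 (vec (A i) (A (S i)))) /\
    Permutation (map (fun i => pi1 (vec (A i) (A (S i)))) (seq 0 (S n)))
                (map (fun i => pi2 (vec (A i) (A (S i)))) (seq 0 (S n))).
Proof.
  set (F := fun x => f (clamp 0 1 x)).
  assert (HF : forall t, 0 <= t <= 1 -> F t = f t)
    by (intros t Ht; unfold F; rewrite clamp_id by exact Ht; reflexivity).
  destruct (balanced_chain_exists n F 0 1 (continuous_on_01_clamp f hf) Rlt_0_1)
    as [T HT]; [rewrite HF by lra; exact hf0 | rewrite HF by lra; exact hf1 |].
  destruct (balanced_chain_ext F f 0 1 n T HF HT) as [H0 [HSn [Hrange [Hinc Hperm]]]].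
  exists (fun i => gamma f (T i)); unfold gamma, vec, pi1, pi2; cbn [fst snd].
  split; [intros i Hi; exists (T i); split; [exact (Hrange i Hi) | reflexivity]|].
  split; [rewrite H0, hf0; reflexivity|].
  split; [rewrite HSn, hf1; reflexivity|].
  split; [intros i Hi; destruct (Hinc i Hi); split; lra | exact Hperm].
Qed.
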